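(* Let $(Q,\mathbf z)$ be a weak scaffold for $\pi_\bullet$. Then the modified tropical Plücker vector $\bar\pi_\bullet$ lies in $\mathrm{Dr}(k,n)(\mathbb Z)$, i.e. it is a tropical Plücker vector with all coordinates integers.
   Context: $Q$ is a finite loopless directed graph with $\mathbf z=(z_1,\dots,z_n)\in V(Q)^n$; directed distance $\delta$ uses cost 1 forwards and $k-1$ backwards along an edge (assumed finite, and $\delta(v,w)=1,\delta(w,v)=k-1$ for each edge $v\to w$). Its tropical Plücker vector is $\pi_I=-\frac1k\min_{x}\sum_{i\in I}\delta(x,z_i)$, $I\in\binom{[n]}k$. A coloring is $c:V(Q)\to\mathbb Z/k$ with $c(w)=c(v)+1$ for edges $v\to w$. $(Q,\mathbf z)$ is a weak scaffold for $\pi_\bullet$ if $\pi_\bullet$ is its tropical Plücker vector, $\pi_\bullet\in\mathrm{Dr}(k,n)$ (for all $S\in\binom{[n]}{k-2}$, $a<b<c<d\notin S$, $\min(\pi_{Sab}+\pi_{Scd},\pi_{Sac}+\pi_{Sbd},\pi_{Sad}+\pi_{Sbc})$ attained twice), and $Q$ admits a coloring $c$ (fixed). Identifying $\mathbb Z/k$ with $\{0,\dots,k-1\}$, the modified vector is $\bar\pi_I=\pi_I+\frac1k\sum_{i\in I}c(z_i)$. *)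

From HB Require Import structures.
From mathcomp Require Import all_boot all_order all_algebra.
Unset Printing Implicit Defensive.
Import Order.TTheory GRing.Theory Num.Theory.
Local Open Scope ring_scope.

Section Scaffold.
Variable V : finType.

(* The quiver Q: vertex set V, arrows given by the relation e (v -> w iff e v w). *)

(* wcost e k v w c : there is a walk from v to w in the underlying undirected
   graph of Q whose cost is c, where traversing an arrow forwards costs 1 and
   backwards costs k-1. *)
Inductive wcost (e : rel V) (k : nat) : V -> V -> nat -> Prop :=
| wc_nil v : wcost e k v v 0
| wc_fwd u v w c : e u v -> wcost e k v w c -> wcost e k u w (1 + c)%N
| wc_bwd u v w c : e v u -> wcost e k v w c -> wcost e k u w (k.-1 + c)%N.

(* d is the directed distance delta (finite everywhere): d v w is the minimal
   cost of a walk from v to w. *)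
Definition is_dir_dist (e : rel V) (k : nat) (d : V -> V -> nat) : Prop :=
  forall v w, wcost e k v w (d v w) /\ (forall c, wcost e k v w c -> (d v w <= c)%N).

(* min_x sum_{i in I} delta(x, z_i)  (the initial value of the fold is the
   maximum, so that this is the genuine minimum over the vertices). *)
Definition min_sum (n : nat) (d : V -> V -> nat) (z : 'I_n -> V) (I : {set 'I_n}) : nat :=
  \big[minn/ (\max_(x : V) \sum_(i in I) d x (z i))%N]_(x : V) (\sum_(i in I) d x (z i))%N.

Definition trop_plucker (k n : nat) (d : V -> V -> nat) (z : 'I_n -> V)
  (I : {set 'I_n}) : rat :=
  - (k%:R)^-1 * (min_sum n d z I)%:R.

(* coloring c : V -> Z/k (identified with {0,...,k-1}), c(w) = c(v) + 1 on arrows *)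
Definition is_coloring (e : rel V) (k : nat) (c : V -> 'I_k) : Prop :=
  forall v w, e v w -> nat_of_ord (c w) = ((c v + 1) %% k)%N.

End Scaffold.

Definition min_attained_twice (x y z : rat) : bool :=
  let m := Num.min x (Num.min y z) in
  (2 <= (x == m) + (y == m) + (z == m))%N.

Definition in_Dr (k n : nat) (p : {set 'I_n} -> rat) : Prop :=
  forall (S : {set 'I_n}) (a b c d : 'I_n),
    (#|S| + 2)%N = k ->
    (a < b)%N -> (b < c)%N -> (c < d)%N ->
    a \notin S -> b \notin S -> c \notin S -> d \notin S ->
    min_attained_twice
      (p (a |: (b |: S)) + p (c |: (d |: S)))
      (p (a |: (c |: S)) + p (b |: (d |: S)))
      (p (a |: (d |: S)) + p (b |: (c |: S))).

Definition in_Dr_Z (k n : nat) (p : {set 'I_n} -> rat) : Prop :=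
  in_Dr k n p /\ (forall I : {set 'I_n}, #|I| = k -> p I \is a Num.int).

Definition weak_scaffold (V : finType) (e : rel V) (k n : nat) (z : 'I_n -> V)
  (d : V -> V -> nat) (p : {set 'I_n} -> rat) (c : V -> 'I_k) : Prop :=
  (forall v, ~~ e v v) /\
  is_dir_dist V e k d /\
  (forall v w, e v w -> d v w = 1%N /\ d w v = k.-1) /\
  (forall I : {set 'I_n}, #|I| = k -> p I = trop_plucker V k n d z I) /\
  in_Dr k n p /\
  is_coloring V e k c.

Definition modified_plucker (V : finType) (k n : nat) (z : 'I_n -> V)
  (p : {set 'I_n} -> rat) (c : V -> 'I_k) (I : {set 'I_n}) : rat :=
  p I + (k%:R)^-1 * (\sum_(i in I) nat_of_ord (c (z i)))%:R.

From HB Require Import structures.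
From mathcomp Require Import all_boot all_order all_algebra.
From mathcomp Require Import zify ring.
Import Order.TTheory GRing.Theory Num.Theory.

(* The modification adds to pi the additive weight I |-> (1/k) sum_(i in I) c(z_i),
   which shifts the three terms of every three-term Plucker relation by the same
   amount, so bar pi stays in Dr(k,n).  For integrality, the minimum defining pi_I
   is attained at some vertex x; the coloring shows that every walk from x to z_i
   has cost congruent to c(z_i) - c(x) mod k, so min_x sum_(i in I) delta(x, z_i)
   is congruent to sum_(i in I) c(z_i) - k c(x), i.e. to sum_(i in I) c(z_i),
   and bar pi_I is an integer. *)

Lemma bigminn_attained (T : finType) (F : T -> nat) (x0 : T) :
  exists x, \big[minn/(\max_(y : T) F y)%N]_(y : T) F y = F x.
Proof.
apply: (big_ind (fun m => exists x, m = F x)).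
- have T_gt0 : (0 < #|T|)%N by apply/card_gt0P; exists x0.
  by have [x ->] := bigop.eq_bigmax F T_gt0; exists x.
- by move=> _ _ [x ->] [y ->]; rewrite /minn; case: ifP; eauto.
- by move=> x _; exists x.
Qed.

Section Coloring.
Context {V : finType} {e : rel V} {k : nat} {c : V -> 'I_k}.
Hypothesis c_col : is_coloring V e k c.

Lemma wcost_eqmod v w cst : wcost V e k v w cst -> (cst + c v = c w %[mod k])%N.
Proof.
elim=> {v w cst} [//|u v w cst /c_col cv _ IH|u v w cst /c_col cu _ IH].
- by rewrite -IH cv modnDmr; congr (_ %% _)%N; lia.
- have k_gt0 : (0 < k)%N := leq_ltn_trans (leq0n _) (ltn_ord (c u)).
  rewrite cu modnDmr -IH.
  have -> : (k.-1 + cst + (c v + 1) = (cst + c v) + k)%N by lia.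
  by rewrite modnDr.
Qed.

Context {d : V -> V -> nat}.
Hypothesis d_dist : is_dir_dist V e k d.

Lemma sum_dist_eqmod {n} (z : 'I_n -> V) (I : {set 'I_n}) x :
  (\sum_(i in I) d x (z i) + #|I| * c x = \sum_(i in I) c (z i) %[mod k])%N.
Proof.
rewrite -sum_nat_const -big_split /=.
rewrite -[LHS]modn_summ -[RHS]modn_summ; congr (_ %% _)%N.
by apply: eq_bigr => i _; apply: wcost_eqmod; case: (d_dist x (z i)).
Qed.

Lemma min_sum_eqmod {n} (z : 'I_n -> V) (I : {set 'I_n}) :
  #|I| = k -> (0 < k)%N ->
  (min_sum V n d z I = \sum_(i in I) c (z i) %[mod k])%N.
Proof.
move=> cardI k_gt0.
have [i0 _] : exists i0, i0 \in I by apply/card_gt0P; rewrite cardI.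
rewrite /min_sum.
have [x ->] := bigminn_attained _ (fun y => \sum_(i in I) d y (z i))%N (z i0).
by rewrite -(sum_dist_eqmod z I x) cardI [in RHS]addnC mulnC modnMDl.
Qed.

End Coloring.

Local Open Scope ring_scope.

Lemma eqmod_divn_int (R : archiFieldType) (k m s : nat) :
  (m = s %[mod k])%N -> (k%:R^-1 * (s%:R - m%:R) : R) \is a Num.int.
Proof.
have [-> | k_gt0] := posnP k; first by rewrite !modn0 => ->; rewrite subrr mulr0.
move=> ms; rewrite (divn_eq s k) (divn_eq m k) ms !natrD !natrM.
have k_neq0 : (k%:R : R) != 0 by rewrite pnatr_eq0 -lt0n.
have -> : k%:R^-1 * ((s %/ k)%:R * k%:R + (s %% k)%:R - ((m %/ k)%:R * k%:R + (s %% k)%:R))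
  = (s %/ k)%:R - (m %/ k)%:R :> R by field.
by rewrite rpredB ?natr_int.
Qed.

Lemma min_attained_twiceDr (x y w t : rat) :
  min_attained_twice (x + t) (y + t) (w + t) = min_attained_twice x y w.
Proof.
rewrite /min_attained_twice.
have -> : Num.min (x + t) (Num.min (y + t) (w + t)) = Num.min x (Num.min y w) + t.
  by rewrite /Num.min !ltrD2r; case: (ltP y w) => _; rewrite ltrD2r; case: ifP.
by rewrite !(inj_eq (addIr t)).
Qed.

Lemma in_Dr_add_weight {k n} {p q : {set 'I_n} -> rat} (f : 'I_n -> rat) :
  (forall I, q I = p I + \sum_(i in I) f i) -> in_Dr k n p -> in_Dr k n q.
Proof.
move=> qE p_Dr S a b c d cardS ab bc cd aS bS cS dS.
set wS := \sum_(i in S) f i.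
have qpairE x y : x != y -> x \notin S -> y \notin S ->
    q (x |: (y |: S)) = p (x |: (y |: S)) + (f x + f y + wS).
  move=> xy xS yS; rewrite qE big_setU1 ?big_setU1 ?addrA //=.
  by rewrite !inE negb_or xy.
have neq x y : (x < y)%N -> x != y by move=> xy; apply: contraTneq xy => ->; rewrite ltnn.
have ac := ltn_trans ab bc; have bd := ltn_trans bc cd; have ad := ltn_trans ab bd.
rewrite !qpairE ?neq //.
set t := f a + f b + f c + f d + (wS + wS).
have shiftE (P1 P2 : rat) x y u v : f x + f y + f u + f v = f a + f b + f c + f d ->
    P1 + (f x + f y + wS) + (P2 + (f u + f v + wS)) = P1 + P2 + t.
  by move=> fE; rewrite /t -fE; ring.
have f_acbd : f a + f c + f b + f d = f a + f b + f c + f d by ring.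
have f_adbc : f a + f d + f b + f c = f a + f b + f c + f d by ring.
by rewrite !shiftE // min_attained_twiceDr; apply: p_Dr.
Qed.

Lemma modified_plucker_int {V : finType} {e : rel V} {k n : nat} {z : 'I_n -> V}
    {d : V -> V -> nat} {p : {set 'I_n} -> rat} {c : V -> 'I_k} {I : {set 'I_n}} :
  is_dir_dist V e k d -> is_coloring V e k c ->
  p I = trop_plucker V k n d z I -> #|I| = k ->
  modified_plucker V k n z p c I \is a Num.int.
Proof.
move=> d_dist c_col pI cardI.
rewrite /modified_plucker pI /trop_plucker mulNr addrC -mulrBr.
have [k0 | k_gt0] := posnP k.
  by rewrite (_ : k%:R = 0 :> rat) ?k0 // invr0 mul0r.
exact: eqmod_divn_int (min_sum_eqmod c_col d_dist z I cardI k_gt0).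
Qed.

Theorem proposition3p11 (V : finType) (e : rel V) (k n : nat) (z : 'I_n -> V)
  (d : V -> V -> nat) (p : {set 'I_n} -> rat) (c : V -> 'I_k) :
  weak_scaffold V e k n z d p c ->
  in_Dr_Z k n (modified_plucker V k n z p c).
Proof.
move=> [_ [d_dist [_ [p_trop [p_Dr c_col]]]]]; split.
- apply: (in_Dr_add_weight (fun i => k%:R^-1 * (c (z i))%:R) _ p_Dr) => I.
  by rewrite /modified_plucker natr_sum mulr_sumr.
- by move=> I cardI; apply: modified_plucker_int d_dist c_col (p_trop I cardI) cardI.
Qed.
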